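(* Let $\mathbf{X}$ be either an $N$-sgrm over $\mathbb{R}^d$, or a good sgrm with $\dot{\mathbf{X}}_{s,s}\in\mathcal{L}^N(\mathbb{R}^d)$ for all $s$, and let $\mathfrak{B}^N$ be an orthonormal basis of $\mathcal{L}^N(\mathbb{R}^d)\subset T^N(\mathbb{R}^d)$. Then a smooth path $Y:[0,T]\to\mathbb{R}^e$ solves $dY=f(Y)\,d\mathbf{X}$ if and only if $$\dot Y_s=\sum_{\mathfrak{u}\in\mathfrak{B}^N}f_{\mathfrak{u}}(Y_s)\langle\dot{\mathbf{X}}_{s,s},\mathfrak{u}\rangle\quad\text{for all }s\in[0,T].$$
   Context: Fix $T>0$, $d,e\ge1$. $T((\mathbb{R}^d))$: formal tensor series over words in $\{1,\dots,d\}$ (incl. empty word $\mathbf{1}$), concatenation $\otimes$; $T^N(\mathbb{R}^d)$: span of words of length $\le N$ with truncated product $\otimes_N$, projection $\mathrm{proj}_N$; $\langle\mathbf{x},w\rangle$ the coefficient of $w$, extended bilinearly; $T^N(\mathbb{R}^d)$ carries the inner product making words orthonormal. Shuffle: bilinear, unit $\mathbf{1}$, $wi\sqcup\!\sqcup vj=(w\sqcup\!\sqcup vj)i+(wi\sqcup\!\sqcup v)j$. $\mathcal{L}(\mathbb{R}^d)$: Lie polynomials generated by the letters; $\mathcal{L}^N(\mathbb{R}^d)=\mathrm{proj}_N\mathcal{L}(\mathbb{R}^d)$. $N$-sgrm: non-zero $\mathbf{X}:[0,T]^2\to T^N(\mathbb{R}^d)$ with the shuffle relation $\langle\mathbf{X}_{s,t},v\sqcup\!\sqcup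 w\rangle=\langle\mathbf{X}_{s,t},v\rangle\langle\mathbf{X}_{s,t},w\rangle$ ($|v|+|w|\le N$), Chen's relation $\mathbf{X}_{s,u}\otimes_N\mathbf{X}_{u,t}=\mathbf{X}_{s,t}$, and smooth $t\mapsto\langle\mathbf{X}_{s,t},w\rangle$; sgrm: same in $T((\mathbb{R}^d))$ for all words with $\otimes$. Diagonal derivative $\dot{\mathbf{X}}_{s,s}=\partial_t|_{t=s}\mathbf{X}_{s,t}$. A good sgrm is the minimal extension of some $N'$-sgrm $\mathbf{Y}$, i.e. the unique sgrm agreeing with $\mathbf{Y}$ on words of length $\le N'$ whose diagonal derivative lies in $\mathcal{L}^{N'}(\mathbb{R}^d)$. Vector fields: $(f_1,\dots,f_d)$ smooth on $\mathbb{R}^e$ with bounded derivatives; $f\vartriangleright g:=f^i(\partial_ig^j)\partial_j$; $f_{\mathbf{1}}=\mathrm{id}$, $f_{\ell_1\cdots\ell_n}:=f_{\ell_1}\vartriangleright(\cdots\vartriangleright(f_{\ell_{n-1}}\vartriangleright f_{\ell_n})\cdots)$; for $\mathbf{x}\in T(\mathbb{R}^d)$, $f_{\mathbf{x}}:=\sum_w\langle\mathbf{x},w\rangle f_w$. For such $\mathbf{X}$, ''$Y$ solves $dY=f(Y)d\mathbf{X}$'' means $Y$ is smooth and $\dot Y_s=\sum_{|w|\le N}f_w(Y_s)\langle\dot{\mathbf{X}}_{s,s},w\rangle$ for all $s$. *)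

From HB Require Import structures.
From mathcomp Require Import all_boot all_order all_algebra.
From mathcomp Require Import all_classical all_reals all_analysis.
Set Implicit Arguments. Unset Strict Implicit. Unset Printing Implicit Defensive.
Import Order.TTheory GRing.Theory Num.Theory.
Import numFieldNormedType.Exports.
Local Open Scope classical_set_scope.
Local Open Scope ring_scope.

Section Defs.
Variable R : realType.

Definition I0T (T : R) : set R := [set x | 0 <= x <= T].

Definition has_deriv_within (V : normedModType R) (T : R) (g : R -> V)
    (s : R) (l : V) : Prop :=
  (fun h : R => h^-1 *: (g (s + h) - g s))
    @ (within [set h : R | h != 0 /\ I0T T (s + h)] (nbhs (0 : R))) --> l.

Definition smooth_on (V : normedModType R) (T : R) (g : R -> V) : Prop :=
  exists D : nat -> R -> V,
    (forall s, I0T T s -> D 0%N s = g s) /\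
    (forall k s, I0T T s -> has_deriv_within T (D k) s (D k.+1 s)).

(** Tensor series over words in {1..d}: coefficient functions on words. *)
Definition tensor (d : nat) := seq 'I_d -> R.

(** Words of length <= N are enumerated as k.-tuples, k <= N. *)
Definition ip (d N : nat) (x y : tensor d) : R :=
  \sum_(k < N.+1) \sum_(t : k.-tuple 'I_d) x t * y t.

Definition proj (d N : nat) (x : tensor d) : tensor d :=
  fun w => if (size w <= N)%N then x w else 0.

Definition tmul (d : nat) (x y : tensor d) : tensor d :=
  fun w => \sum_(i < (size w).+1) x (take i w) * y (drop i w).
Definition tmulN (d N : nat) (x y : tensor d) : tensor d :=
  proj N (tmul x y).

Definition letter (d : nat) (i : 'I_d) : tensor d :=
  fun w => if w == [:: i] then 1 else 0.

(** Shuffle, by the last-letter recursion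
    wi ⧢ vj = (w ⧢ vj) i + (wi ⧢ v) j, as a list (multiset) of words.
    sh_rev works on reversed words, so its first-letter recursion is the
    last-letter recursion of the original words. *)
Fixpoint sh_rev (d : nat) (v : seq 'I_d) : seq 'I_d -> seq (seq 'I_d) :=
  match v with
  | [::] => fun w => [:: w]
  | i :: v' =>
    fix shv (w : seq 'I_d) : seq (seq 'I_d) :=
      match w with
      | [::] => [:: i :: v']
      | j :: w' => map (cons i) (sh_rev v' (j :: w')) ++ map (cons j) (shv w')
      end
  end.
Definition shuffle (d : nat) (v w : seq 'I_d) : seq (seq 'I_d) :=
  map (@rev _) (sh_rev (rev v) (rev w)).

Definition pair_sh (d : nat) (x : tensor d) (v w : seq 'I_d) : R :=
  \sum_(u <- shuffle v w) x u.

Inductive lie (d : nat) : tensor d -> Prop :=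
| lie_zero : lie (fun _ => 0)
| lie_letter i : lie (letter i)
| lie_add a b : lie a -> lie b -> lie (fun w => a w + b w)
| lie_scale (c : R) a : lie a -> lie (fun w => c * a w)
| lie_bracket a b : lie a -> lie b -> lie (fun w => tmul a b w - tmul b a w).

Definition in_LN (d N : nat) (x : tensor d) : Prop :=
  exists l, lie l /\ x = proj N l.

Definition orthonormal_basis_LN (d N m : nat) (B : 'I_m -> tensor d) : Prop :=
  (forall u, in_LN N (B u)) /\
  (forall u v, ip N (B u) (B v) = (u == v)%:R) /\
  (forall x, in_LN N x -> exists c : 'I_m -> R,
      forall w, x w = \sum_(u < m) c u * B u w).

Definition is_Nsgrm (d : nat) (T : R) (N : nat) (X : R -> R -> tensor d) : Prop :=
  (forall s t, I0T T s -> I0T T t -> forall w, (N < size w)%N -> X s t w = 0) /\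
  (exists s t, I0T T s /\ I0T T t /\ X s t <> (fun _ => 0)) /\
  (forall s t, I0T T s -> I0T T t -> forall v w, (size v + size w <= N)%N ->
      pair_sh (X s t) v w = X s t v * X s t w) /\
  (forall s u t, I0T T s -> I0T T u -> I0T T t ->
      tmulN N (X s u) (X u t) = X s t) /\
  (forall s w, I0T T s -> smooth_on T (fun t => X s t w)).

Definition is_sgrm (d : nat) (T : R) (X : R -> R -> tensor d) : Prop :=
  (exists s t, I0T T s /\ I0T T t /\ X s t <> (fun _ => 0)) /\
  (forall s t, I0T T s -> I0T T t -> forall v w,
      pair_sh (X s t) v w = X s t v * X s t w) /\
  (forall s u t, I0T T s -> I0T T u -> I0T T t ->
      tmul (X s u) (X u t) = X s t) /\
  (forall s w, I0T T s -> smooth_on T (fun t => X s t w)).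

Definition is_diag_deriv (d : nat) (T : R) (X : R -> R -> tensor d)
    (Xdot : R -> tensor d) : Prop :=
  forall s w, I0T T s -> has_deriv_within T (fun t => X s t w) s (Xdot s w).

(** good sgrm: minimal extension of some N'-sgrm Y *)
Definition is_good_sgrm (d : nat) (T : R) (X : R -> R -> tensor d)
    (Xdot : R -> tensor d) : Prop :=
  is_sgrm T X /\
  exists (N' : nat) (Y : R -> R -> tensor d),
    is_Nsgrm T N' Y /\
    (forall s t, I0T T s -> I0T T t -> forall w, (size w <= N')%N ->
        X s t w = Y s t w) /\
    (forall s, I0T T s -> in_LN N' (Xdot s)).

Definition pD (e : nat) (i : 'I_e) (g : 'rV[R]_e -> 'rV[R]_e) : 'rV[R]_e -> 'rV[R]_e :=
  fun y => 'D_(delta_mx 0 i) g y.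

Fixpoint Dn (e : nat) (js : seq 'I_e) (g : 'rV[R]_e -> 'rV[R]_e) : 'rV[R]_e -> 'rV[R]_e :=
  match js with
  | [::] => g
  | i :: js' => pD i (Dn js' g)
  end.

Definition vector_field (e : nat) (g : 'rV[R]_e -> 'rV[R]_e) : Prop :=
  (forall js y, differentiable (Dn js g) y) /\
  (forall js, js != [::] -> exists M : R, forall y, `|Dn js g y| <= M).

Definition vf_comp (e : nat) (f g : 'rV[R]_e -> 'rV[R]_e) : 'rV[R]_e -> 'rV[R]_e :=
  fun y => \sum_(i < e) f y 0 i *: 'D_(delta_mx 0 i) g y.

Fixpoint fw (d e : nat) (f : 'I_d -> 'rV[R]_e -> 'rV[R]_e) (w : seq 'I_d)
    : 'rV[R]_e -> 'rV[R]_e :=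
  match w with
  | [::] => id
  | [:: l] => f l
  | l :: w' => vf_comp (f l) (fw f w')
  end.

Definition fT (d e N : nat) (f : 'I_d -> 'rV[R]_e -> 'rV[R]_e) (x : tensor d)
    : 'rV[R]_e -> 'rV[R]_e :=
  fun y => \sum_(k < N.+1) \sum_(t : k.-tuple 'I_d) x t *: fw f t y.

Definition solves (d e : nat) (T : R) (N : nat) (f : 'I_d -> 'rV[R]_e -> 'rV[R]_e)
    (Xdot : R -> tensor d) (Y : R -> 'rV[R]_e) : Prop :=
  smooth_on T Y /\
  forall s, I0T T s -> has_deriv_within T Y s
    (\sum_(k < N.+1) \sum_(t : k.-tuple 'I_d) Xdot s t *: fw f t (Y s)).

End Defs.

(* Both sides apply x |-> f_x, which is linear and only sees the words of
   length <= N, to x = Xdot_{s,s}; they agree as soon as proj_N x lies in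
   L^N, because then proj_N x = sum_u <x, u> u in the orthonormal basis.
   For a good sgrm this is assumed.  For an N-sgrm, X_{s,s} = 1, and
   differentiating the shuffle relation at t = s shows that x has no constant
   term and is primitive up to level N: <x, v sh w> = 0 for non-empty v, w
   with |v| + |w| <= N.  By the Dynkin-Specht-Wever lemma, the Dynkin map D
   (left-normed bracketing) multiplies the degree-n part x_n of a primitive x
   by n, so proj_N x = sum_(1 <= n <= N) D(x_n) / n is a Lie polynomial. *)

From Pilot Require Import Defs.
From HB Require Import structures.
From mathcomp Require Import all_boot all_order all_algebra.
From mathcomp Require Import all_classical all_reals all_analysis.
From mathcomp Require Import zify ring lra.
Import Order.TTheory GRing.Theory Num.Theory.
Import numFieldNormedType.Exports.
Local Open Scope ring_scope.
Set Implicit Arguments. Unset Strict Implicit.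

Section DynkinSpechtWever.
Variables (R : realType) (d : nat).
Implicit Types (x y : tensor R d) (u v w : seq 'I_d).

Definition rquot x (a : 'I_d) : tensor R d := fun w => x (rcons w a).

Lemma pair_sh_nil_l x w : pair_sh x [::] w = x w.
Proof. by rewrite /pair_sh /shuffle /= revK big_cons big_nil addr0. Qed.

Lemma pair_sh_nil_r x v : pair_sh x v [::] = x v.
Proof.
rewrite /pair_sh /shuffle /= -{2}[v]revK.
by case: (rev v) => [|i v'] /=; rewrite big_cons big_nil addr0.
Qed.

Lemma pair_sh_rcons x v a w b : pair_sh x (rcons v a) (rcons w b) =
  pair_sh (rquot x a) v (rcons w b) + pair_sh (rquot x b) (rcons v a) w.
Proof.
rewrite /pair_sh /shuffle !rev_rcons /= map_cat big_cat -!map_comp !big_map.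
by congr (_ + _); apply: eq_bigr => z _ /=; rewrite /rquot rev_cons.
Qed.

Lemma letter_eq0 (a : 'I_d) w : size w != 1%N -> letter R a w = 0.
Proof. by rewrite /letter; case: ifP => // /eqP ->. Qed.

Lemma tmul_nil x y : tmul x y [::] = x [::] * y [::].
Proof. by rewrite /tmul big_ord_recl big_ord0 addr0. Qed.

Lemma tmul_letter_rcons x a w c :
  tmul x (letter R a) (rcons w c) = if a == c then x w else 0.
Proof.
rewrite /tmul size_rcons big_ord_recr /= drop_oversize ?size_rcons //.
rewrite letter_eq0 // mulr0 addr0 big_ord_recr /=.
rewrite -cats1 take_size_cat // drop_size_cat // big1 ?add0r.
  by rewrite /letter eqseq_cons andbT eq_sym; case: (a == c); rewrite ?mulr1 ?mulr0.
move=> i _; rewrite letter_eq0 ?mulr0 // size_drop size_cat /=.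
by have := ltn_ord i; move: (nat_of_ord i) => j hj; apply/eqP; lia.
Qed.

Lemma tmul_letter_cons a x c w :
  tmul (letter R a) x (c :: w) = if a == c then x w else 0.
Proof.
rewrite /tmul /= big_ord_recl /= letter_eq0 // mul0r add0r big_ord_recl /=.
rewrite take0 drop0 /letter eqseq_cons andbT eq_sym big1 ?addr0.
  by case: (a == c); rewrite ?mul1r ?mul0r.
by case: w => [[]//|z w] i _ /=; rewrite eqseq_cons andbF mul0r.
Qed.

Definition bracket x y : tensor R d := fun w => tmul x y w - tmul y x w.

(* [dynkin n x] is the left-normed bracketing [..[[a1, a2], a3], .., an]
   applied to the degree-[n] part of [x]. *)
Fixpoint dynkin n x : tensor R d :=
  match n with
  | 0 => fun _ => 0
  | 1 => fun w => \sum_(a < d) x [:: a] * letter R a w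
  | S ((S _) as k) => fun w => \sum_(a < d) bracket (dynkin k (rquot x a)) (letter R a) w
  end.

Lemma dynkinSS k x w : dynkin k.+2 x w =
  \sum_(a < d) (tmul (dynkin k.+1 (rquot x a)) (letter R a) w
                - tmul (letter R a) (dynkin k.+1 (rquot x a)) w).
Proof. by []. Qed.

Lemma lie_sum (I : Type) (r : seq I) (F : I -> tensor R d) :
  (forall i, lie (F i)) -> lie (fun w => \sum_(i <- r) F i w).
Proof.
move=> lieF; elim: r => [|i r IH].
  by under eq_fun do rewrite big_nil; exact: lie_zero.
by under eq_fun do rewrite big_cons; exact: lie_add.
Qed.

Lemma dynkin_lie n x : lie (dynkin n x).
Proof.
elim: n x => [|[|k] IH] x /=; first exact: lie_zero.
  by apply: lie_sum => a; apply: lie_scale; apply: lie_letter.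
by apply: lie_sum => a; apply: lie_bracket; [exact: IH | exact: lie_letter].
Qed.

Lemma dynkin_eq0 n x w : size w != n -> dynkin n x w = 0.
Proof.
elim: n x w => [|[|k] IH] x w hw //=; rewrite big1 // => a _.
  by rewrite letter_eq0 ?mulr0.
rewrite /bracket.
have -> : tmul (dynkin k.+1 (rquot x a)) (letter R a) w = 0.
  case/lastP: w hw => [|w c] hw; first by rewrite tmul_nil letter_eq0 ?mulr0.
  by rewrite tmul_letter_rcons; case: ifP => // _; apply: IH; rewrite size_rcons in hw.
have -> : tmul (letter R a) (dynkin k.+1 (rquot x a)) w = 0.
  case: w hw => [|c w] hw; first by rewrite tmul_nil letter_eq0 ?mul0r.
  by rewrite tmul_letter_cons; case: ifP => // _; apply: IH.
by rewrite subrr.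
Qed.

Definition split_sh x u i := pair_sh x (rev (take i u)) (drop i u).

Lemma split_sh_cons_rcons x a w b i : (i <= (size w).+2)%N ->
  split_sh x (a :: rcons w b) i =
  (if i is j.+1 then split_sh (rquot x a) (rcons w b) j else 0) +
  (if i == (size w).+2 then 0 else split_sh (rquot x b) (a :: w) i).
Proof.
case: i => [|j] hj; first by rewrite add0r /split_sh /= !pair_sh_nil_l.
case: eqP => [[->]|hne].
  rewrite addr0 /split_sh !take_oversize ?drop_oversize /= ?size_rcons //.
  by rewrite !pair_sh_nil_r /rquot rev_cons.
have hjw : (j <= size w)%N by move: hj hne; rewrite ltnS leq_eqVlt => /orP [/eqP -> //|].
rewrite /split_sh /= rev_cons drop_rcons // pair_sh_rcons rev_cons.
by rewrite -cats1 takel_cat.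
Qed.

Lemma sum_split_sh_cons_rcons x a w b (c : nat -> R) :
  \sum_(i < (size w).+3) c i * split_sh x (a :: rcons w b) i =
  \sum_(i < (size w).+2) c i.+1 * split_sh (rquot x a) (rcons w b) i +
  \sum_(i < (size w).+2) c i * split_sh (rquot x b) (a :: w) i.
Proof.
rewrite (eq_bigr (fun i : 'I_(size w).+3 =>
  c i * (if nat_of_ord i is j.+1 then split_sh (rquot x a) (rcons w b) j else 0) +
  c i * (if nat_of_ord i == (size w).+2 then 0 else split_sh (rquot x b) (a :: w) i))); last first.
  by move=> i _; rewrite split_sh_cons_rcons -?mulrDr // -ltnS.
rewrite big_split /=; congr (_ + _); first by rewrite big_ord_recl /= mulr0 add0r.
rewrite big_ord_recr /= eqxx mulr0 addr0; apply: eq_bigr => i _ /=.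
by rewrite ltn_eqF.
Qed.

Lemma split_sh_singleton x a i : (i <= 1)%N -> split_sh x [:: a] i = x [:: a].
Proof. by case: i => [|[|]] //= _; rewrite /split_sh /= ?pair_sh_nil_l ?pair_sh_nil_r. Qed.

(* The antipode identity [S * id = 0] on non-empty words in the shuffle Hopf
   algebra, where [S v = (-1)^|v| rev v]. *)
Lemma antipode_split_sh x u : u != [::] ->
  \sum_(i < (size u).+1) (-1) ^+ i * split_sh x u i = 0.
Proof.
move=> u0; have [n] := ubnP (size u); elim: n x u u0 => // n IH x [//|a u] _.
case/lastP: u => [|w b] /= hn.
  by rewrite !big_ord_recr big_ord0 /= !split_sh_singleton // add0r mulN1r mul1r subrr.
rewrite size_rcons sum_split_sh_cons_rcons (IH _ (a :: w)) //; last first.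
  by move: hn; rewrite /= size_rcons; lia.
under eq_bigr => i _ do rewrite exprS mulN1r mulNr.
by rewrite sumrN -(size_rcons w b) IH ?oppr0 ?addr0 // -size_eq0 size_rcons.
Qed.

Lemma dynkin_split_sh x u : u != [::] -> dynkin (size u) x u =
  \sum_(i < (size u).+1) (-1) ^+ i * ((size u)%:R - i%:R) * split_sh x u i.
Proof.
move=> u0; have [n] := ubnP (size u); elim: n x u u0 => // n IH x [//|a u] _.
case/lastP: u => [|w b] hn.
  rewrite /= (eq_bigr (fun c => if c == a then x [:: c] else 0)); last first.
    by move=> c _; rewrite /letter eqseq_cons andbT eq_sym; case: eqP; rewrite ?mulr1 ?mulr0.
  rewrite -big_mkcond big_pred1_eq !big_ord_recr big_ord0 /= !split_sh_singleton //.
  by rewrite subrr !mulr0 mul0r addr0 add0r expr0 subr0 !mul1r.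
have -> : size (a :: rcons w b) = (size w).+2 by rewrite /= size_rcons.
rewrite dynkinSS sumrB -rcons_cons.
under eq_bigr => c _ do rewrite tmul_letter_rcons.
rewrite rcons_cons; under [X in _ - X]eq_bigr => c _ do rewrite tmul_letter_cons.
rewrite -!big_mkcond !big_pred1_eq.
have IHw y v : size v = (size w).+1 -> dynkin (size w).+1 y v =
    \sum_(i < (size w).+2) (-1) ^+ i * ((size w).+1%:R - i%:R) * split_sh y v i.
  move=> hv; rewrite -hv IH -?size_eq0 ?hv //.
  by move: hn; rewrite /= size_rcons.
rewrite !IHw ?size_rcons //.
rewrite (sum_split_sh_cons_rcons _ _ _ _ (fun i => (-1) ^+ i * ((size w).+2%:R - i%:R))).
have := antipode_split_sh (rquot x b) (isT : a :: w != [::]); rewrite /= => anti.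
rewrite addrC; congr (_ + _).
  rewrite -sumrN; apply: eq_bigr => j _.
  by rewrite exprS !mulrSr; ring.
rewrite -[LHS]addr0 -[X in _ + X]anti -big_split /=; apply: eq_bigr => i _.
by rewrite !mulrSr; ring.
Qed.

Definition primitive N x := forall v w, v != [::] -> w != [::] ->
  (size v + size w <= N)%N -> pair_sh x v w = 0.

Lemma dynkin_primitive N x u : primitive N x -> u != [::] -> (size u <= N)%N ->
  dynkin (size u) x u = (size u)%:R * x u.
Proof.
move=> xP u0 uN; rewrite dynkin_split_sh // big_ord_recl /= expr0 mul1r subr0.
rewrite /split_sh take0 drop0 pair_sh_nil_l big1 ?addr0 // => i _.
rewrite /bump /= add1n; have := ltn_ord i; move: (nat_of_ord i) => j ju.
have [<-|ne] := eqVneq j.+1 (size u); first by rewrite subrr mulr0 mul0r.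
have iu : (j.+1 < size u)%N by rewrite ltn_neqAle ne.
rewrite xP ?mulr0 //.
- by rewrite -size_eq0 size_rev size_takel // ltnW.
- by rewrite -size_eq0 size_drop subn_eq0 -ltnNge.
- by rewrite size_rev size_takel ?size_drop ?subnKC // ltnW.
Qed.

Lemma primitive_in_LN N x : x [::] = 0 -> primitive N x -> in_LN N (Defs.proj N x).
Proof.
move=> x0 xP.
exists (fun w => \sum_(n < N) (n.+1)%:R^-1 * dynkin n.+1 x w); split.
  by apply: lie_sum => n; apply: lie_scale; apply: dynkin_lie.
apply/funext => w; rewrite /Defs.proj; case: ifP => // wN.
have [->|w0] := eqVneq w [::].
  by rewrite x0 big1 // => n _; rewrite dynkin_eq0 ?mulr0.
have wN' : ((size w).-1 < N)%N by rewrite prednK ?lt0n ?size_eq0.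
rewrite (eq_bigr (fun n : 'I_N => if n == Ordinal wN'
                   then (size w)%:R^-1 * dynkin (size w) x w else 0)); last first.
  move=> n _; case: eqP => [->|nw]; first by rewrite [nat_of_ord _]/= prednK // lt0n size_eq0.
  rewrite dynkin_eq0 ?mulr0 //; apply/eqP => wn.
  by apply: nw; apply: val_inj; rewrite /= wn.
rewrite -big_mkcond big_pred1_eq (dynkin_primitive xP) //.
by rewrite mulrA mulVf ?mul1r // pnatr_eq0 size_eq0.
Qed.

End DynkinSpechtWever.

Section OrthonormalExpansion.
Variables (R : realType) (d e N m : nat) (B : 'I_m -> tensor R d).
Hypothesis hB : orthonormal_basis_LN N B.
Implicit Types (x : tensor R d) (f : 'I_d -> 'rV[R]_e -> 'rV[R]_e) (y : 'rV[R]_e).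

Lemma proj_id_in_LN x : in_LN N x -> Defs.proj N x = x.
Proof.
by case=> l [_ ->]; apply/funext => w; rewrite /Defs.proj; case: ifP => // ->.
Qed.

Lemma ip_proj x x' : ip N (Defs.proj N x) x' = ip N x x'.
Proof.
apply: eq_bigr => k _; apply: eq_bigr => t _.
by rewrite /Defs.proj size_tuple -ltnS ltn_ord.
Qed.

Lemma fT_proj f x y : fT N f (Defs.proj N x) y = fT N f x y.
Proof.
apply: eq_bigr => k _; apply: eq_bigr => t _.
by rewrite /Defs.proj size_tuple -ltnS ltn_ord.
Qed.

Lemma fT_lin_comb (I : finType) f (c : I -> R) (b : I -> tensor R d) y :
  fT N f (fun w => \sum_(u : I) c u * b u w) y = \sum_(u : I) c u *: fT N f (b u) y.
Proof.
rewrite /fT; under eq_bigr => k _ do under eq_bigr => t _ do rewrite scaler_suml.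
under eq_bigr => k _ do rewrite exchange_big.
rewrite exchange_big; apply: eq_bigr => u _.
rewrite scaler_sumr; apply: eq_bigr => k _; rewrite scaler_sumr.
by apply: eq_bigr => t _; rewrite scalerA.
Qed.

Lemma orthonormal_expansion x : in_LN N x ->
  x = fun w => \sum_(u < m) ip N x (B u) * B u w.
Proof.
case: hB => _ [orthoB spanB] /spanB [c xE].
suff ipE v : ip N x (B v) = c v.
  by apply/funext => w; rewrite xE; apply: eq_bigr => u _; rewrite ipE.
rewrite /ip; under eq_bigr => k _ do under eq_bigr => t _ do rewrite xE mulr_suml.
under eq_bigr => k _ do rewrite exchange_big.
rewrite exchange_big (eq_bigr (fun u => c u * ip N (B u) (B v))) => [|u _]; last first.
  rewrite /ip mulr_sumr; apply: eq_bigr => k _; rewrite mulr_sumr.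
  by apply: eq_bigr => t _; rewrite mulrA.
rewrite (bigD1 v) //= orthoB eqxx mulr1 big1 ?addr0 // => u /negbTE uv.
by rewrite orthoB uv mulr0.
Qed.

Lemma fT_orthonormal_expansion f x y : in_LN N (Defs.proj N x) ->
  fT N f x y = \sum_(u < m) ip N x (B u) *: fT N f (B u) y.
Proof.
move=> /orthonormal_expansion xE.
by rewrite -fT_proj xE fT_lin_comb; under eq_bigr do rewrite ip_proj.
Qed.

End OrthonormalExpansion.

Local Open Scope classical_set_scope.

Section DerivWithin.
Variables (R : realType) (T : R) (V : normedModType R).
Hypothesis T_gt0 : 0 < T.

Definition admissible_incr (s : R) := [set h : R | h != 0 /\ I0T T (s + h)].

(* Half of [min eps T] fits into [[0, T]] on at least one side of [s]. *)
Lemma admissible_incr_proper s : I0T T s ->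
  ProperFilter (within (admissible_incr s) (nbhs (0 : R))).
Proof.
move=> /andP [s_ge0 s_leT]; apply: Build_ProperFilter.
rewrite /within => /nbhs_ballP [eps eps_gt0 epsA].
have mine : Num.min eps T <= eps by rewrite ge_min lexx.
have minT : Num.min eps T <= T by rewrite ge_min lexx orbT.
have min_gt0 : 0 < Num.min eps T by rewrite lt_min eps_gt0 T_gt0.
set r := Num.min eps T / 2.
have [sl|sr] := leP s (T / 2).
  apply: (epsA r); first by rewrite /ball /= sub0r normrN gtr0_norm /r; lra.
  by split; [rewrite gt_eqF /r; lra | apply/andP; split; rewrite /r; lra].
apply: (epsA (- r)); first by rewrite /ball /= sub0r opprK gtr0_norm /r; lra.
by split; [rewrite oppr_eq0 gt_eqF /r; lra | apply/andP; split; rewrite /r; lra].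
Qed.

Lemma has_deriv_within_unique (g : R -> V) s l1 l2 : I0T T s ->
  has_deriv_within T g s l1 -> has_deriv_within T g s l2 -> l1 = l2.
Proof.
move=> /admissible_incr_proper sP g1 g2.
exact: (cvg_unique (@norm_hausdorff _ V) g1 g2).
Qed.

Lemma has_deriv_within_eq (g1 g2 : R -> V) s l :
  (forall t, I0T T t -> g1 t = g2 t) -> I0T T s ->
  has_deriv_within T g1 s l -> has_deriv_within T g2 s l.
Proof.
move=> g12 s0T; apply: cvg_trans; apply: near_eq_cvg; near=> h.
have [_ shT] : admissible_incr s h by near: h; apply: withinT.
by rewrite !g12.
Unshelve. all: by end_near.
Qed.

Lemma has_deriv_within_cst (c : V) s : has_deriv_within T (fun=> c) s 0.
Proof.
rewrite /has_deriv_within; under eq_fun do rewrite subrr scaler0.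
exact: cvg_cst.
Qed.

Lemma has_deriv_within_sum (I : Type) (r : seq I) (g : I -> R -> V) (l : I -> V) s :
  (forall i, has_deriv_within T (g i) s (l i)) ->
  has_deriv_within T (fun t => \sum_(i <- r) g i t) s (\sum_(i <- r) l i).
Proof.
move=> gl; elim: r => [|i r IH].
  by under eq_fun do rewrite big_nil; rewrite big_nil; exact: has_deriv_within_cst.
rewrite /has_deriv_within.
have -> : (fun h : R => h^-1 *: (\sum_(j <- i :: r) g j (s + h) - \sum_(j <- i :: r) g j s)) =
    (fun h : R => h^-1 *: (g i (s + h) - g i s)) \+
    (fun h : R => h^-1 *: (\sum_(j <- r) g j (s + h) - \sum_(j <- r) g j s)).
  by apply/funext => h; rewrite /= !big_cons opprD addrACA scalerDr.
rewrite big_cons; exact: cvgD (gl i) IH.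
Qed.

Lemma has_deriv_within_mul0 (g1 g2 : R -> R) s l1 l2 :
  g1 s = 0 -> g2 s = 0 ->
  has_deriv_within T g1 s l1 -> has_deriv_within T g2 s l2 ->
  has_deriv_within T (fun t => g1 t * g2 t) s 0.
Proof.
move=> g1s g2s g1l g2l; rewrite /has_deriv_within.
have id_cvg : (fun h : R => h) @ within (admissible_incr s) (nbhs (0 : R)) --> (0 : R).
  exact: cvg_within.
have := cvgM (cvgM id_cvg g1l) g2l; rewrite !mul0r => prod_cvg.
apply: cvg_trans _ (prod_cvg (within_filter _ _) (within_filter _ _)).
apply: near_eq_cvg; near=> h.
have [hne _] : h != 0 /\ I0T T (s + h) by near: h; apply: withinT.
rewrite /= g1s g2s mulr0 !subr0 /GRing.scale /=.
by rewrite [h * _]mulrA mulfV // mul1r mulrCA.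
Unshelve. all: by end_near.
Qed.

End DerivWithin.

Section Nsgrm.
Variables (R : realType) (T : R) (d N : nat) (X : R -> R -> tensor R d).
Hypothesis X_Nsgrm : is_Nsgrm T N X.

(* The constant term is multiplicative by Chen's relation, idempotent by the
   shuffle relation, and cannot vanish since X is non-zero. *)
Lemma Nsgrm_nil s t : I0T T s -> I0T T t -> X s t [::] = 1.
Proof.
case: X_Nsgrm => [trunc [[s1 [t1 [s1T [t1T X1_neq0]]]] [shX [chenX _]]]] sT tT.
have chen_nil a b c : I0T T a -> I0T T b -> I0T T c -> X a c [::] = X a b [::] * X b c [::].
  by move=> aT bT cT; rewrite -(chenX a b c) // /tmulN /Defs.proj /= tmul_nil.
have X1nil_neq0 : X s1 t1 [::] != 0.
  apply: contra_notN X1_neq0 => /eqP X1nil; apply/funext => w.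
  have [wN|/trunc -> //] := leqP (size w) N.
  by have := shX s1 t1 s1T t1T w [::]; rewrite pair_sh_nil_r X1nil mulr0 addn0; exact.
have Xnil_neq0 : X s t [::] != 0.
  apply: contraNneq X1nil_neq0 => Xnil.
  by rewrite (chen_nil s1 s t1) // (chen_nil s t t1) // Xnil mul0r mulr0.
have := shX s t sT tT [::] [::] (leq0n N); rewrite pair_sh_nil_l => idem.
by apply: (mulIf Xnil_neq0); rewrite mul1r -idem.
Qed.

Lemma Nsgrm_diag s w : I0T T s -> w != [::] -> X s s w = 0.
Proof.
move=> sT; have X1 := Nsgrm_nil sT sT.
case: X_Nsgrm => [trunc [_ [_ [chenX _]]]].
have [n] := ubnP (size w); elim: n w => // n IH w /ltnSE wn w0.
have [wN|/trunc -> //] := leqP (size w) N.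
have := chenX s s s sT sT sT => /(congr1 (fun z => z w)).
rewrite /tmulN /Defs.proj wN /tmul.
case: w wn w0 wN => [//|c w] wn _ wN.
rewrite big_ord_recl /= X1 mul1r big_ord_recr /= take_size drop_size X1 mulr1.
rewrite big1 ?add0r => [|i _]; first by lra.
rewrite (IH (drop i w)) ?mulr0 //.
  by rewrite size_drop; apply: leq_ltn_trans (leq_subr _ _) _.
by rewrite -size_eq0 size_drop subn_eq0 -ltnNge.
Qed.

Variable Xdot : R -> tensor R d.
Hypotheses (T_gt0 : 0 < T) (X_deriv : is_diag_deriv T X Xdot).

Lemma Nsgrm_diag_deriv_nil s : I0T T s -> Xdot s [::] = 0.
Proof.
move=> sT; apply: (has_deriv_within_unique T_gt0 sT (@X_deriv s [::] sT)).
apply: (has_deriv_within_eq _ sT (has_deriv_within_cst T (1 : R) s)) => t tT.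
by rewrite Nsgrm_nil.
Qed.

(* Differentiate the shuffle relation at [t = s], where both factors vanish. *)
Lemma Nsgrm_diag_deriv_primitive s : I0T T s -> primitive N (Xdot s).
Proof.
move=> sT v w v0 w0 vwN.
have sh_deriv : has_deriv_within T (fun t => X s t v * X s t w) s (pair_sh (Xdot s) v w).
  apply: (has_deriv_within_eq _ sT (has_deriv_within_sum (r := shuffle v w) (fun u => @X_deriv s u sT))).
  by move=> t tT; case: X_Nsgrm => [_ [_ [shX _]]]; apply: shX.
apply: (has_deriv_within_unique T_gt0 sT sh_deriv).
exact: has_deriv_within_mul0 (Nsgrm_diag sT v0) (Nsgrm_diag sT w0)
  (@X_deriv s v sT) (@X_deriv s w sT).
Qed.

End Nsgrm.

Theorem lemma2p21 (R : realType) (T : R) (d e N : nat)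
  (hT : 0 < T) (hd : (0 < d)%N) (he : (0 < e)%N)
  (f : 'I_d -> 'rV[R]_e -> 'rV[R]_e) (hf : forall i, vector_field (f i))
  (X : R -> R -> tensor R d) (Xdot : R -> tensor R d)
  (hXdot : is_diag_deriv T X Xdot)
  (hX : is_Nsgrm T N X \/
        (is_good_sgrm T X Xdot /\ forall s, I0T T s -> in_LN N (Xdot s)))
  (m : nat) (B : 'I_m -> tensor R d) (hB : orthonormal_basis_LN N B)
  (Y : R -> 'rV[R]_e) (hY : smooth_on T Y) :
  solves T N f Xdot Y <->
  (forall s, I0T T s -> has_deriv_within T Y s
     (\sum_(u < m) ip N (Xdot s) (B u) *: fT N f (B u) (Y s))).
Proof.
have Xdot_LN s : I0T T s -> in_LN N (Defs.proj N (Xdot s)).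
  case: hX => [X_Nsgrm | [_ Xdot_LN]] sT.
    apply: primitive_in_LN.
      exact: (Nsgrm_diag_deriv_nil X_Nsgrm hT hXdot sT).
    exact: (Nsgrm_diag_deriv_primitive X_Nsgrm hT hXdot sT).
  by rewrite proj_id_in_LN; apply: Xdot_LN.
have fT_Xdot s : I0T T s -> fT N f (Xdot s) (Y s) =
    \sum_(u < m) ip N (Xdot s) (B u) *: fT N f (B u) (Y s).
  by move=> sT; apply/fT_orthonormal_expansion/Xdot_LN.
split=> [[_ Y_deriv] s sT | Y_deriv]; first by rewrite -fT_Xdot //; exact: Y_deriv.
by split=> // s sT; have := Y_deriv s sT; rewrite -fT_Xdot.
Qed.
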